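(* Assume $T_1\ge1$, $\eta_1\le\frac{1}{4k(T_1+1)}$, $0<r\le\frac{\eta_1}{200}$, and suppose that $\frac{k}{4d}\le|\mathcal{W}_0^+\cap\mathcal{A}^+|,\,|\mathcal{W}_0^-\cap\mathcal{A}^-|\le\frac{k}{d}$ and $|S_1^+|,|S_1^-|\ge\frac{m_1}{3}$. Define $z(x)\in\mathbb{R}^k$ by $z(x)_i=\max_j\sigma(w_i^{(T_1)}\cdot x[j])$, and define $v^*\in\mathbb{R}^k$ by $v^*_i=\frac{80d}{k\eta_1T_1}$ for $i\in\mathcal{W}_0^+\cap\mathcal{A}^+$, $v^*_i=-\frac{80d}{k\eta_1T_1}$ for $i\in\mathcal{W}_0^-\cap\mathcal{A}^-$, and $v^*_i=0$ otherwise. Then $y\,(v^*\cdot z(x))>1$ for every $(x,y)$ in the support of $\mathcal{D}$, and $\|v^*\|^2\le\frac{2\cdot 80^2\,d}{k\,\eta_1^2T_1^2}$.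
   Context: Fix $n\ge1$, $d\ge3$ and orthonormal $o_1,\dots,o_d\in\mathbb{R}^d$. Inputs are $x=(x[1],\dots,x[n])\in\mathbb{R}^{nd}$. The distribution $\mathcal{D}$ on $\mathbb{R}^{nd}\times\{\pm1\}$: $y$ uniform on $\{\pm1\}$; given $y=1$, an index $j_+$ uniform on $\{1,\dots,n\}$ is drawn, $x[j_+]=o_1$, and for $j\ne j_+$ independently $x[j]=o_{i_j}$ with $i_j$ uniform on $\{3,\dots,d\}$; given $y=-1$, the same with $o_2$ instead of $o_1$. Network $N_{(W,a)}(x)=\sum_{i=1}^k a_i\max_j\sigma(w_i\cdot x[j])$, $\sigma(z)=\max\{0,z\}$. Loss $\ell(z)=\log(1+e^{-z})$. $S_1$ is a finite set of $m_1$ samples from $\mathcal{D}$, $S_1^\pm=\{x:(x,\pm1)\in S_1\}$, $\mathcal{L}_1(W,a)=\frac1{m_1}\sum_{(x,y)\in S_1}\ell(yN_{(W,a)}(x))$. Initialization: $\|w_i^{(0)}\|=r$, $a_i^{(0)}\in\{\pm1\}$. Iterates $W^{(t)}=W^{(t-1)}-\eta_1\nabla_W\mathcal{L}_1(W^{(t-1)},a^{(0)})$, $t=1,\dots,T_1$, with gradient convention $\frac{\partial}{\partial w_i}\max_j\sigma(w_i\cdot x[j])=p_i(x)$, where $p_i(x)=x[j^*]$ for $j^*\in\arg\max_j w_i\cdot x[j]$ if $w_i\cdot x[j^*]>0$ and $0$ otherwise; $w_i^{(t)}$ is the $i$th row of $W^{(t)}$. Sets: $\mathcal{A}^\pm=\{i:a_i^{(0)}=\pm1\}$,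 $\mathcal{W}_0^+=\{i:\arg\max_{l\in\{1,3,\dots,d\}}w_i^{(0)}\cdot o_l=1,\ w_i^{(0)}\cdot o_1>0\}$, $\mathcal{W}_0^-=\{i:\arg\max_{l\in\{2,3,\dots,d\}}w_i^{(0)}\cdot o_l=2,\ w_i^{(0)}\cdot o_2>0\}$. *)

From Stdlib Require Import Reals List.
Open Scope R_scope.

(* Vectors of R^d are represented as nat -> R; only coordinates c < d matter. *)
Definition vec := nat -> R.

Fixpoint rsum (n : nat) (f : nat -> R) : R :=
  match n with O => 0 | S m => rsum m f + f m end.

Definition dot (d : nat) (u v : vec) : R := rsum d (fun c => u c * v c).

Definition relu (z : R) : R := Rmax 0 z.

(* an input x = (x[0], ..., x[n-1]) of n patches *)
Definition input := nat -> vec.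

(* neuron d n w x = max_{j<n} relu (w . x[j])  (for n >= 1; relu values are >= 0) *)
Fixpoint neuron (d n : nat) (w : vec) (x : input) : R :=
  match n with
  | O => 0
  | S j => Rmax (neuron d j w x) (relu (dot d w (x j)))
  end.

Definition net (d n k : nat) (W : nat -> vec) (a : nat -> R) (x : input) : R :=
  rsum k (fun i => a i * neuron d n (W i) x).

Definition loss (z : R) : R := ln (1 + exp (- z)).
Definition dloss (z : R) : R := - / (1 + exp z).

(* p_i(x) with the argmax index j chosen: x[j] if w . x[j] > 0, else 0 *)
Definition pvec (d : nat) (w : vec) (x : input) (j : nat) : vec :=
  fun c => if Rlt_dec 0 (dot d w (x j)) then x j c else 0.

(* gradient of L_1 w.r.t. w_i, given the chosen subgradient p i x of max_j relu *)
Definition grad (d n k : nat) (S1 : list (input * R)) (W : nat -> vec)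
  (a : nat -> R) (p : nat -> input -> vec) (i : nat) : vec :=
  fun c => / INR (length S1) *
    fold_right (fun s acc =>
      dloss (snd s * net d n k W a (fst s)) * snd s * a i * p i (fst s) c + acc)
      0 S1.

(* x matches the support pattern with the "signal" vector o lab at a position jp,
   and o_{i_j} with i_j in {2,...,d-1} (0-based: o_3..o_d) elsewhere *)
Definition supp_pattern (d n : nat) (o : nat -> vec) (lab : nat) (x : input) : Prop :=
  exists jp, (jp < n)%nat /\ exists ii : nat -> nat,
    forall j, (j < n)%nat ->
      (j = jp -> x j = o lab) /\
      (j <> jp -> (2 <= ii j < d)%nat /\ x j = o (ii j)).

(* (x,y) in the support of D (o 0 = o_1, o 1 = o_2) *)
Definition in_supp (d n : nat) (o : nat -> vec) (xy : input * R) : Prop :=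
  (snd xy = 1 /\ supp_pattern d n o 0 (fst xy)) \/
  (snd xy = -1 /\ supp_pattern d n o 1 (fst xy)).

Definition count_lab (y : R) (S1 : list (input * R)) : nat :=
  length (filter (fun s => if Req_EM_T (snd s) y then true else false) S1).

Definition card_is (P : nat -> Prop) (c : nat) : Prop :=
  exists L : list nat, NoDup L /\ (forall i, In i L <-> P i) /\ length L = c.

(* W_0^+ : argmax_{l in {1,3,..,d}} w.o_l = 1 (unique maximiser) and w.o_1 > 0 *)
Definition W0plus (d : nat) (o : nat -> vec) (w : vec) : Prop :=
  (forall l, (2 <= l < d)%nat -> dot d w (o l) < dot d w (o 0%nat)) /\
  0 < dot d w (o 0%nat).

Definition W0minus (d : nat) (o : nat -> vec) (w : vec) : Prop :=
  (forall l, (2 <= l < d)%nat -> dot d w (o l) < dot d w (o 1%nat)) /\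
  0 < dot d w (o 1%nat).

(* Each gradient step moves every [w_i . o_q] by at most [eta1], so during training
   [|w_i . o_q| <= r + eta1 t], the network output stays within [1/4] on the samples, and the
   logistic derivative stays below [-1/4].  For a neuron of [W_0^+ ∩ A^+], the positive samples
   (a third of [S_1]) then raise [w_i . o_1] by at least [eta1/12] per step while no sample raises
   any other [w_i . o_q]; so the neuron keeps preferring the patch [o_1], ends with output at least
   [eta1 T_1 / 12] on positive inputs and at most [r] on negative ones (symmetrically for
   [W_0^- ∩ A^-]).  With at least [k/4d] such neurons on the correct side and at most [k/d] on the
   wrong one, the margin exceeds [1]; the norm bound counts the nonzero entries of [v^*]. *)

From Stdlib Require Import Reals List Lra Lia.
Open Scope R_scope.

Definition lsum {A : Type} (L : list A) (f : A -> R) : R :=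
  fold_right (fun s acc => f s + acc) 0 L.

Lemma rsum_ext n f g : (forall c, (c < n)%nat -> f c = g c) -> rsum n f = rsum n g.
Proof.
  induction n as [|n IH]; intros H; simpl; [reflexivity|].
  rewrite IH by (intros; apply H; lia). rewrite H by lia. reflexivity.
Qed.

Lemma rsum_le n f g : (forall c, (c < n)%nat -> f c <= g c) -> rsum n f <= rsum n g.
Proof.
  induction n as [|n IH]; intros H; simpl; [lra|].
  assert (f n <= g n) by (apply H; lia).
  assert (rsum n f <= rsum n g) by (apply IH; intros; apply H; lia).
  lra.
Qed.

Lemma rsum_plus n f g : rsum n (fun c => f c + g c) = rsum n f + rsum n g.
Proof. induction n as [|n IH]; simpl; [lra|]. rewrite IH. ring. Qed.

Lemma rsum_scal n al f : rsum n (fun c => al * f c) = al * rsum n f.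
Proof. induction n as [|n IH]; simpl; [ring|]. rewrite IH. ring. Qed.

Lemma rsum_const n b : rsum n (fun _ => b) = INR n * b.
Proof. induction n as [|n IH]; simpl rsum; [simpl; ring|]. rewrite IH, S_INR. ring. Qed.

Lemma rsum_abs_le n f B :
  (forall i, (i < n)%nat -> Rabs (f i) <= B) -> Rabs (rsum n f) <= INR n * B.
Proof.
  induction n as [|n IH]; simpl rsum; intros H.
  - simpl. rewrite Rabs_R0. lra.
  - rewrite S_INR.
    assert (Rabs (f n) <= B) by (apply H; lia).
    assert (Rabs (rsum n f) <= INR n * B) by (apply IH; intros; apply H; lia).
    pose proof (Rabs_triang (rsum n f) (f n)). lra.
Qed.

Definition indic (L : list nat) (i : nat) : R :=
  if in_dec Nat.eq_dec i L then 1 else 0.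

Lemma rsum_delta k a :
  (a < k)%nat -> rsum k (fun i => if Nat.eq_dec i a then 1 else 0) = 1.
Proof.
  induction k as [|k IH]; intros Ha; [lia|]. simpl rsum.
  destruct (Nat.eq_dec k a) as [->|Hne].
  - rewrite (rsum_ext _ _ (fun _ => 0)), rsum_const; [ring|].
    intros c Hc. destruct (Nat.eq_dec c a); [lia|reflexivity].
  - rewrite IH by lia. ring.
Qed.

Lemma indic_cons a L i :
  ~ In a L -> indic (a :: L) i = (if Nat.eq_dec i a then 1 else 0) + indic L i.
Proof.
  intros Ha. unfold indic.
  destruct (Nat.eq_dec i a) as [->|Hne];
    destruct (in_dec Nat.eq_dec _ (a :: L)) as [Hi|Hi];
    destruct (in_dec Nat.eq_dec _ L); simpl in Hi; try tauto; try ring.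
  destruct Hi as [->|]; tauto.
Qed.

Lemma rsum_indic k L :
  NoDup L -> (forall i, In i L -> (i < k)%nat) -> rsum k (indic L) = INR (length L).
Proof.
  induction L as [|a L IH]; intros Hnd Hk.
  - rewrite (rsum_ext _ _ (fun _ => 0)) by reflexivity. rewrite rsum_const. simpl; ring.
  - apply NoDup_cons_iff in Hnd as [Ha Hnd].
    rewrite (rsum_ext _ _ (fun i => (if Nat.eq_dec i a then 1 else 0) + indic L i))
      by (intros; apply indic_cons; exact Ha).
    rewrite rsum_plus, rsum_delta, IH by (simpl in Hk; auto).
    simpl length. rewrite S_INR. ring.
Qed.

Lemma lsum_nonneg {A} (L : list A) f : (forall s, In s L -> 0 <= f s) -> 0 <= lsum L f.
Proof.
  induction L as [|x L IH]; intros H; simpl; [lra|].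
  assert (0 <= f x) by (apply H; simpl; auto).
  assert (0 <= lsum L f) by (apply IH; intros; apply H; simpl; auto).
  unfold lsum in *. lra.
Qed.

Lemma lsum_abs_le {A} (L : list A) f B :
  (forall s, In s L -> Rabs (f s) <= B) -> Rabs (lsum L f) <= INR (length L) * B.
Proof.
  induction L as [|x L IH]; intros H.
  - unfold lsum; simpl. rewrite Rabs_R0. lra.
  - assert (Rabs (f x) <= B) by (apply H; simpl; auto).
    assert (Rabs (lsum L f) <= INR (length L) * B) by (apply IH; intros; apply H; simpl; auto).
    unfold lsum in *; simpl length; simpl fold_right. rewrite S_INR.
    pose proof (Rabs_triang (f x) (fold_right (fun s acc => f s + acc) 0 L)). lra.
Qed.

Lemma lsum_avg_abs_le_1 {A} (L : list A) f :
  (1 <= length L)%nat -> (forall s, In s L -> Rabs (f s) <= 1) ->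
  Rabs (/ INR (length L) * lsum L f) <= 1.
Proof.
  intros HL H. assert (Hm : 1 <= INR (length L)) by (apply (le_INR 1); exact HL).
  pose proof (lsum_abs_le L f 1 H).
  rewrite Rabs_mult, Rabs_right by (left; apply Rinv_0_lt_compat; lra).
  apply Rle_trans with (/ INR (length L) * INR (length L)).
  - apply Rmult_le_compat_l; [left; apply Rinv_0_lt_compat|]; lra.
  - rewrite Rinv_l; lra.
Qed.

Lemma lsum_le_count (L : list (input * R)) f y c :
  0 <= c -> (forall s, In s L -> f s <= 0) -> (forall s, In s L -> snd s = y -> f s <= - c) ->
  lsum L f <= - c * INR (count_lab y L).
Proof.
  intros Hc. induction L as [|x L IH]; intros H1 H2.
  - unfold lsum, count_lab. simpl. lra.
  - assert (lsum L f <= - c * INR (count_lab y L))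
      by (apply IH; intros; [apply H1|apply H2]; simpl; auto).
    unfold count_lab in *. unfold lsum in *. simpl.
    destruct (Req_EM_T (snd x) y) as [e|e].
    + simpl length. rewrite S_INR. assert (f x <= - c) by (apply H2; simpl; auto). lra.
    + assert (f x <= 0) by (apply H1; simpl; auto). lra.
Qed.

Lemma dot_ext_l d u u' w : (forall c, (c < d)%nat -> u c = u' c) -> dot d u w = dot d u' w.
Proof. intros H. apply rsum_ext. intros c Hc. rewrite H by exact Hc. reflexivity. Qed.

Lemma dot_sub_scal d f g al u : dot d (fun c => f c - al * g c) u = dot d f u - al * dot d g u.
Proof.
  unfold dot. rewrite <- rsum_scal.
  replace (rsum d (fun c => f c * u c) - rsum d (fun c => al * (g c * u c)))
    with (rsum d (fun c => f c * u c) + rsum d (fun c => -1 * (al * (g c * u c)))).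
  - rewrite <- rsum_plus. apply rsum_ext. intros; ring.
  - rewrite rsum_scal. ring.
Qed.

Lemma dot_lsum {A} d (L : list A) h p u :
  dot d (fun c => lsum L (fun s => h s * p s c)) u = lsum L (fun s => h s * dot d (p s) u).
Proof.
  induction L as [|x L IH]; simpl.
  - unfold dot, lsum. simpl. rewrite (rsum_ext _ _ (fun _ => 0)) by (intros; ring).
    rewrite rsum_const. ring.
  - unfold lsum in *. simpl. rewrite <- IH. unfold dot.
    rewrite <- rsum_scal, <- rsum_plus. apply rsum_ext. intros; ring.
Qed.

Definition grad_weight (d n k : nat) (W : nat -> vec) (a : nat -> R) (i : nat)
  (s : input * R) : R :=
  dloss (snd s * net d n k W a (fst s)) * snd s * a i.

Lemma dot_grad d n k S1 W a p i u :
  dot d (grad d n k S1 W a p i) u =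
  / INR (length S1) * lsum S1 (fun s => grad_weight d n k W a i s * dot d (p i (fst s)) u).
Proof.
  rewrite <- dot_lsum. unfold dot. rewrite <- rsum_scal.
  apply rsum_ext. intros c _. unfold grad, lsum, grad_weight. ring.
Qed.

Lemma dloss_bounds z : -1 < dloss z < 0.
Proof.
  unfold dloss. pose proof (exp_pos z).
  assert (0 < / (1 + exp z)) by (apply Rinv_0_lt_compat; lra).
  assert (/ (1 + exp z) < 1) by (rewrite <- Rinv_1; apply Rinv_lt_contravar; lra).
  lra.
Qed.

Lemma dloss_le_neg_quarter z : z <= 1 -> dloss z <= - / 4.
Proof.
  intros H. unfold dloss.
  assert (exp z <= 3).
  { apply Rle_trans with (exp 1); [|exact exp_le_3].
    destruct (Req_dec z 1) as [->|]; [lra|]. left. apply exp_increasing. lra. }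
  pose proof (exp_pos z).
  assert (/ 4 <= / (1 + exp z)) by (apply Rinv_le_contravar; lra).
  lra.
Qed.

(* Expand [|w - (w . u) u|^2 >= 0]. *)
Lemma dot_unit_sq_le d w u : dot d u u = 1 -> dot d w u ^ 2 <= dot d w w.
Proof.
  intros Hu. set (l := dot d w u).
  assert (Hsq : 0 <= rsum d (fun c => (w c - l * u c) * (w c - l * u c))).
  { rewrite <- (Rmult_0_r (INR d)), <- rsum_const. apply rsum_le. intros; apply Rle_0_sqr. }
  rewrite (rsum_ext _ _ (fun c => w c * w c + ((-2 * l) * (w c * u c) + (l * l) * (u c * u c))))
    in Hsq by (intros; ring).
  rewrite !rsum_plus, !rsum_scal in Hsq. unfold dot in *. fold l in Hsq. nra.
Qed.

Lemma neuron_nonneg d n w x : 0 <= neuron d n w x.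
Proof.
  induction n as [|n IH]; simpl; [lra|].
  apply Rle_trans with (neuron d n w x); [exact IH|apply Rmax_l].
Qed.

Lemma dot_le_neuron d n w x j : (j < n)%nat -> dot d w (x j) <= neuron d n w x.
Proof.
  induction n as [|n IH]; intros Hj; [lia|]. simpl.
  destruct (Nat.eq_dec j n) as [->|Hne].
  - apply Rle_trans with (relu (dot d w (x n))); [apply Rmax_r|apply Rmax_r].
  - apply Rle_trans with (neuron d n w x); [apply IH; lia|apply Rmax_l].
Qed.

Lemma neuron_le d n w x B :
  0 <= B -> (forall j, (j < n)%nat -> dot d w (x j) <= B) -> neuron d n w x <= B.
Proof.
  intros HB. induction n as [|n IH]; intros H; simpl; [lra|].
  apply Rmax_lub; [apply IH; intros; apply H; lia|].
  apply Rmax_lub; [exact HB|apply H; lia].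
Qed.

(* Class [0] is the label [1] (signal [o 0]), class [1] is the label [-1] (signal [o 1]). *)
Definition class_label (c : nat) : R := match c with O => 1 | S _ => -1 end.

Lemma class_label_mul c c' :
  (c < 2)%nat -> (c' < 2)%nat -> class_label c * class_label c' = if Nat.eq_dec c c' then 1 else -1.
Proof. intros Hc Hc'. destruct c as [|[|]], c' as [|[|]]; simpl; lia || lra. Qed.

Lemma class_label_abs c : Rabs (class_label c) = 1.
Proof.
  destruct c; simpl; [apply Rabs_R1|]. rewrite Rabs_left; lra.
Qed.

Lemma class_label_inj c1 c2 :
  (c1 < 2)%nat -> (c2 < 2)%nat -> class_label c1 = class_label c2 -> c1 = c2.
Proof. intros H1 H2. destruct c1 as [|[|]], c2 as [|[|]]; simpl; lia || lra. Qed.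

Lemma in_supp_class d n o s :
  in_supp d n o s ->
  exists c, (c < 2)%nat /\ snd s = class_label c /\ supp_pattern d n o c (fst s).
Proof. intros [[Hy P]|[Hy P]]; [exists 0%nat|exists 1%nat]; auto. Qed.

Lemma supp_pattern_patch d n o c x j :
  supp_pattern d n o c x -> (j < n)%nat ->
  exists q, x j = o q /\ (q = c \/ (2 <= q < d)%nat).
Proof.
  intros [jp [_ [ii H]]] Hj. destruct (H j Hj) as [H1 H2].
  destruct (Nat.eq_dec j jp) as [->|Hne].
  - exists c. auto.
  - destruct (H2 Hne). exists (ii j). auto.
Qed.

Lemma supp_pattern_signal d n o c x :
  supp_pattern d n o c x -> exists jp, (jp < n)%nat /\ x jp = o c.
Proof. intros [jp [Hjp [ii H]]]. exists jp. split; [exact Hjp|]. apply (H jp Hjp). reflexivity. Qed.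

Definition orthonormal (d : nat) (o : nat -> vec) : Prop :=
  forall p q, (p < d)%nat -> (q < d)%nat -> dot d (o p) (o q) = if Nat.eq_dec p q then 1 else 0.

(* [W0plus] is [aligned d o 0] and [W0minus] is [aligned d o 1]. *)
Definition aligned (d : nat) (o : nat -> vec) (c : nat) (w : vec) : Prop :=
  (forall l, (2 <= l < d)%nat -> dot d w (o l) < dot d w (o c)) /\ 0 < dot d w (o c).

Lemma dot_pvec d w x j u :
  dot d (pvec d w x j) u = if Rlt_dec 0 (dot d w (x j)) then dot d (x j) u else 0.
Proof.
  unfold pvec. destruct (Rlt_dec 0 (dot d w (x j))); [reflexivity|].
  unfold dot. rewrite (rsum_ext _ _ (fun _ => 0)) by (intros; ring). rewrite rsum_const. ring.
Qed.

Lemma pvec_dot_basis_bounds d o w x j p q :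
  orthonormal d o -> (p < d)%nat -> (q < d)%nat -> x j = o p ->
  0 <= dot d (pvec d w x j) (o q) <= 1.
Proof.
  intros Ho Hp Hq Hx. rewrite dot_pvec, Hx.
  destruct (Rlt_dec _ _); [|lra]. rewrite Ho by assumption. destruct (Nat.eq_dec p q); lra.
Qed.

Lemma pvec_dot_own_class d n o c w x j q :
  orthonormal d o -> (2 <= d)%nat -> (c < 2)%nat -> (q < d)%nat ->
  supp_pattern d n o c x -> aligned d o c w ->
  (j < n)%nat -> (forall j', (j' < n)%nat -> dot d w (x j') <= dot d w (x j)) ->
  dot d (pvec d w x j) (o q) = if Nat.eq_dec c q then 1 else 0.
Proof.
  intros Ho Hd Hc Hq P [Hnoise Hsig] Hj Hmax.
  destruct (supp_pattern_signal _ _ _ _ _ P) as [jp [Hjp Ejp]].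
  specialize (Hmax jp Hjp). rewrite Ejp in Hmax.
  destruct (supp_pattern_patch _ _ _ _ _ _ P Hj) as [p [Ep [->|Hp]]].
  - rewrite dot_pvec, Ep. destruct (Rlt_dec _ _); [|lra]. apply Ho; lia.
  - rewrite Ep in Hmax. specialize (Hnoise p Hp). lra.
Qed.

Lemma pvec_dot_other_class d n o c c' w x j :
  orthonormal d o -> (2 <= d)%nat -> (c < 2)%nat -> (c' < 2)%nat -> c' <> c ->
  supp_pattern d n o c' x -> (j < n)%nat -> dot d (pvec d w x j) (o c) = 0.
Proof.
  intros Ho Hd Hc Hc' Hne P Hj.
  destruct (supp_pattern_patch _ _ _ _ _ _ P Hj) as [p [Ep Hp]].
  rewrite dot_pvec, Ep. destruct (Rlt_dec _ _); [|reflexivity].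
  rewrite Ho by lia. destruct (Nat.eq_dec p c); [lia|reflexivity].
Qed.

Section GradientDescent.

Variables (n d k T1 : nat) (o : nat -> vec) (S1 : list (input * R))
  (eta1 r : R) (a : nat -> R) (W : nat -> nat -> vec) (jsel : nat -> nat -> input -> nat).

Hypothesis Hd : (3 <= d)%nat.
Hypothesis Hk : (1 <= k)%nat.
Hypothesis Horth : orthonormal d o.
Hypothesis Hsupp : forall s, In s S1 -> in_supp d n o s.
Hypothesis Hm : (1 <= length S1)%nat.
Hypothesis Hcount_pos : INR (length S1) / 3 <= INR (count_lab 1 S1).
Hypothesis Hcount_neg : INR (length S1) / 3 <= INR (count_lab (-1) S1).
Hypothesis Hr : 0 < r.
Hypothesis Hw0 : forall i, (i < k)%nat -> sqrt (dot d (W 0%nat i) (W 0%nat i)) = r.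
Hypothesis Ha : forall i, (i < k)%nat -> a i = 1 \/ a i = -1.
Hypothesis Hjsel : forall t i x, (jsel t i x < n)%nat /\
  forall j, (j < n)%nat -> dot d (W t i) (x j) <= dot d (W t i) (x (jsel t i x)).
Hypothesis Hgd : forall t, (1 <= t <= T1)%nat -> forall i, (i < k)%nat -> forall c,
  W t i c = W (t - 1)%nat i c - eta1 *
    grad d n k S1 (W (t - 1)%nat) a
      (fun i' x => pvec d (W (t - 1)%nat i') x (jsel (t - 1)%nat i' x)) i c.
Hypothesis Heta : eta1 <= 1 / (4 * INR k * (INR T1 + 1)).
Hypothesis Hreta : r <= eta1 / 200.

Lemma a_abs i : (i < k)%nat -> Rabs (a i) = 1.
Proof. intros Hi. destruct (Ha i Hi) as [->| ->]; [apply Rabs_R1|rewrite Rabs_left; lra]. Qed.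

Local Notation subgrad t i x := (pvec d (W t i) x (jsel t i x)).

(* The change of [w_i . u] in one step, divided by [- eta1]. *)
Local Notation step_change t i u :=
  (/ INR (length S1) *
   lsum S1 (fun s => grad_weight d n k (W t) a i s * dot d (subgrad t i (fst s)) u)).

Lemma gd_step_dot t i u :
  (t < T1)%nat -> (i < k)%nat -> dot d (W (S t) i) u = dot d (W t i) u - eta1 * step_change t i u.
Proof.
  intros Ht Hi.
  rewrite (dot_ext_l d (W (S t) i) (fun c => W t i c -
             eta1 * grad d n k S1 (W t) a (fun i' x => subgrad t i' x) i c)).
  - rewrite dot_sub_scal, dot_grad. reflexivity.
  - intros c _. rewrite Hgd by lia. replace (S t - 1)%nat with t by lia. reflexivity.
Qed.

Lemma init_coord_bound i q : (i < k)%nat -> (q < d)%nat -> Rabs (dot d (W 0%nat i) (o q)) <= r.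
Proof.
  intros Hi Hq. pose proof (dot_unit_sq_le d (W 0%nat i) (o q)) as Hcs.
  rewrite Horth in Hcs by exact Hq. destruct (Nat.eq_dec q q); [|congruence].
  specialize (Hcs eq_refl).
  assert (Hnorm : dot d (W 0%nat i) (W 0%nat i) = r * r).
  { rewrite <- (Hw0 i Hi), sqrt_sqrt; [reflexivity|].
    apply Rle_trans with (2 := Hcs). apply pow2_ge_0. }
  apply Rabs_le. nra.
Qed.

Lemma grad_weight_abs_le t i s : (i < k)%nat -> In s S1 -> Rabs (grad_weight d n k (W t) a i s) <= 1.
Proof.
  intros Hi Hs. unfold grad_weight. rewrite !Rabs_mult.
  destruct (in_supp_class _ _ _ _ (Hsupp s Hs)) as [c [_ [-> _]]].
  rewrite class_label_abs, a_abs by exact Hi.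
  pose proof (dloss_bounds (class_label c * net d n k (W t) a (fst s))).
  assert (Rabs (dloss (class_label c * net d n k (W t) a (fst s))) <= 1) by (apply Rabs_le; lra).
  nra.
Qed.

Lemma patch_is_basis s j :
  In s S1 -> (j < n)%nat -> exists q, (q < d)%nat /\ fst s j = o q.
Proof.
  intros Hs Hj. destruct (in_supp_class _ _ _ _ (Hsupp s Hs)) as [c [Hc [_ P]]].
  destruct (supp_pattern_patch _ _ _ _ _ _ P Hj) as [q [Eq Hq]]. exists q. split; [lia|exact Eq].
Qed.

Lemma step_change_abs_le t i q :
  (i < k)%nat -> (q < d)%nat -> Rabs (step_change t i (o q)) <= 1.
Proof.
  intros Hi Hq. apply lsum_avg_abs_le_1; [exact Hm|]. intros s Hs.
  destruct (Hjsel t i (fst s)) as [Hj _]. destruct (patch_is_basis s _ Hs Hj) as [p [Hp Ep]].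
  pose proof (pvec_dot_basis_bounds d o (W t i) (fst s) _ p q Horth Hp Hq Ep).
  pose proof (grad_weight_abs_le t i s Hi Hs).
  rewrite Rabs_mult, (Rabs_right (dot _ _ _)) by lra.
  pose proof (Rabs_pos (grad_weight d n k (W t) a i s)). nra.
Qed.

Lemma coord_bound t i q :
  (t <= T1)%nat -> (i < k)%nat -> (q < d)%nat -> Rabs (dot d (W t i) (o q)) <= r + eta1 * INR t.
Proof.
  intros Ht Hi Hq. induction t as [|t IH].
  - simpl INR. rewrite Rmult_0_r, Rplus_0_r. apply init_coord_bound; assumption.
  - rewrite gd_step_dot by lia. rewrite S_INR.
    specialize (IH ltac:(lia)). pose proof (step_change_abs_le t i q Hi Hq).
    assert (0 < eta1) by lra.
    pose proof (Rabs_triang (dot d (W t i) (o q)) (- (eta1 * step_change t i (o q)))) as Htri.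
    rewrite Rabs_Ropp, Rabs_mult, (Rabs_right eta1) in Htri by lra.
    unfold Rminus. nra.
Qed.

Lemma width_budget : INR k * (r + eta1 * INR T1) <= 1 / 4.
Proof.
  assert (HK : 1 <= INR k) by (apply (le_INR 1); exact Hk).
  pose proof (pos_INR T1).
  assert (eta1 * (4 * INR k * (INR T1 + 1)) <= 1).
  { apply Rmult_le_reg_r with (/ (4 * INR k * (INR T1 + 1))); [apply Rinv_0_lt_compat; nra|].
    rewrite Rmult_assoc, Rinv_r, Rmult_1_l by nra. unfold Rdiv in Heta. lra. }
  assert (INR k * r <= INR k * eta1) by (apply Rmult_le_compat_l; lra).
  nra.
Qed.

(* The network stays in the linear regime of the loss. *)
Lemma net_abs_le t s :
  (t <= T1)%nat -> In s S1 -> Rabs (net d n k (W t) a (fst s)) <= 1 / 4.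
Proof.
  intros Ht Hs.
  assert (Htt : INR t <= INR T1) by (apply le_INR; exact Ht).
  assert (Hbudget : INR k * (r + eta1 * INR t) <= 1 / 4).
  { pose proof width_budget. pose proof (pos_INR k).
    assert (eta1 * INR t <= eta1 * INR T1) by (apply Rmult_le_compat_l; lra). nra. }
  apply Rle_trans with (2 := Hbudget). apply rsum_abs_le. intros i Hi.
  rewrite Rabs_mult, a_abs, Rmult_1_l, Rabs_right by (assumption || apply Rle_ge, neuron_nonneg).
  apply neuron_le; [pose proof (pos_INR t); nra|]. intros j Hj.
  destruct (patch_is_basis s j Hs Hj) as [q [Hq ->]].
  pose proof (coord_bound t i q Ht Hi Hq). pose proof (Rle_abs (dot d (W t i) (o q))). lra.
Qed.

Lemma dloss_on_sample_le t s :
  (t <= T1)%nat -> In s S1 -> dloss (snd s * net d n k (W t) a (fst s)) <= - / 4.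
Proof.
  intros Ht Hs. apply dloss_le_neg_quarter.
  pose proof (net_abs_le t s Ht Hs).
  destruct (in_supp_class _ _ _ _ (Hsupp s Hs)) as [c [_ [-> _]]].
  pose proof (Rle_abs (class_label c * net d n k (W t) a (fst s))) as Habs.
  rewrite Rabs_mult, class_label_abs in Habs. lra.
Qed.

Section AlignedNeuron.

Variables (c i : nat).
Hypothesis Hc : (c < 2)%nat.
Hypothesis Hi : (i < k)%nat.
Hypothesis Hai : a i = class_label c.
Hypothesis Hal : aligned d o c (W 0%nat i).

Lemma grad_weight_class t s c' :
  snd s = class_label c' -> (c' < 2)%nat ->
  grad_weight d n k (W t) a i s =
  dloss (snd s * net d n k (W t) a (fst s)) * (if Nat.eq_dec c' c then 1 else -1).
Proof.
  intros Hy Hc'. unfold grad_weight. rewrite Rmult_assoc, Hai. f_equal.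
  rewrite Hy. apply class_label_mul; assumption.
Qed.

(* Samples of the other class have weight [- dloss > 0] and a nonnegative subgradient. *)
Lemma off_signal_term_nonneg t s q :
  In s S1 -> aligned d o c (W t i) -> (q < d)%nat -> q <> c ->
  0 <= grad_weight d n k (W t) a i s * dot d (subgrad t i (fst s)) (o q).
Proof.
  intros Hs Hal_t Hq Hqc.
  destruct (in_supp_class _ _ _ _ (Hsupp s Hs)) as [c' [Hc' [Hy P]]].
  destruct (Hjsel t i (fst s)) as [Hj Hmax].
  rewrite (grad_weight_class t s c' Hy Hc').
  pose proof (dloss_bounds (snd s * net d n k (W t) a (fst s))).
  destruct (Nat.eq_dec c' c) as [->|Hne].
  - rewrite (pvec_dot_own_class d n o c _ _ _ q Horth ltac:(lia) Hc Hq P Hal_t Hj Hmax).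
    destruct (Nat.eq_dec c q); [congruence|lra].
  - destruct (patch_is_basis s _ Hs Hj) as [p [Hp Ep]].
    pose proof (pvec_dot_basis_bounds d o (W t i) (fst s) _ p q Horth Hp Hq Ep). nra.
Qed.

Lemma signal_term t s :
  In s S1 -> aligned d o c (W t i) ->
  grad_weight d n k (W t) a i s * dot d (subgrad t i (fst s)) (o c) =
  if Req_EM_T (snd s) (class_label c) then dloss (snd s * net d n k (W t) a (fst s)) else 0.
Proof.
  intros Hs Hal_t.
  destruct (in_supp_class _ _ _ _ (Hsupp s Hs)) as [c' [Hc' [Hy P]]].
  destruct (Hjsel t i (fst s)) as [Hj Hmax].
  rewrite (grad_weight_class t s c' Hy Hc').
  destruct (Nat.eq_dec c' c) as [->|Hne].
  - rewrite (pvec_dot_own_class d n o c _ _ _ c Horth ltac:(lia) Hc ltac:(lia) P Hal_t Hj Hmax).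
    destruct (Nat.eq_dec c c), (Req_EM_T (snd s) (class_label c)); congruence || ring.
  - rewrite (pvec_dot_other_class d n o c c' _ _ _ Horth ltac:(lia) Hc Hc' Hne P Hj).
    destruct (Req_EM_T (snd s) (class_label c)) as [Hyc|]; [|ring].
    rewrite Hy in Hyc. apply class_label_inj in Hyc; [congruence|assumption..].
Qed.

Lemma off_signal_step t q :
  (t < T1)%nat -> aligned d o c (W t i) -> (q < d)%nat -> q <> c ->
  dot d (W (S t) i) (o q) <= dot d (W t i) (o q).
Proof.
  intros Ht Hal_t Hq Hqc. rewrite gd_step_dot by assumption.
  assert (0 <= step_change t i (o q)).
  { apply Rmult_le_pos; [left; apply Rinv_0_lt_compat, (lt_INR 0); lia|].
    apply lsum_nonneg. intros s Hs. apply off_signal_term_nonneg; assumption. }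
  assert (0 < eta1) by lra. nra.
Qed.

(* At least a third of the samples have class [c], and each pulls [o c] by at least [1/4]. *)
Lemma signal_step t :
  (t < T1)%nat -> aligned d o c (W t i) ->
  dot d (W t i) (o c) + eta1 / 12 <= dot d (W (S t) i) (o c).
Proof.
  intros Ht Hal_t. rewrite gd_step_dot by assumption.
  assert (Hm' : 1 <= INR (length S1)) by (apply (le_INR 1); exact Hm).
  assert (Hsum : lsum S1 (fun s => grad_weight d n k (W t) a i s * dot d (subgrad t i (fst s)) (o c))
                 <= - / 4 * INR (count_lab (class_label c) S1)).
  { apply lsum_le_count; [lra| |]; intros s Hs; rewrite signal_term by assumption;
      pose proof (dloss_on_sample_le t s ltac:(lia) Hs);
      destruct (Req_EM_T (snd s) (class_label c)); intros; lra || contradiction. }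
  assert (Hstep : step_change t i (o c) <= - / 12).
  { apply Rle_trans with (/ INR (length S1) * (- / 4 * (INR (length S1) / 3))).
    - apply Rmult_le_compat_l; [left; apply Rinv_0_lt_compat; lra|].
      assert (INR (length S1) / 3 <= INR (count_lab (class_label c) S1))
        by (destruct c as [|[|]]; [exact Hcount_pos|exact Hcount_neg|lia]).
      lra.
    - right. field. lra. }
  assert (0 < eta1) by lra. nra.
Qed.

Lemma aligned_progress t :
  (t <= T1)%nat ->
  (forall q, (q < d)%nat -> q <> c -> dot d (W t i) (o q) <= dot d (W 0%nat i) (o q)) /\
  dot d (W 0%nat i) (o c) + eta1 * INR t / 12 <= dot d (W t i) (o c).
Proof.
  induction t as [|t IH]; intros Ht.
  - split; [intros; lra|]. simpl INR. lra.
  - destruct IH as [IHoff IHsig]; [lia|].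
    assert (Heta1 : 0 < eta1) by lra. pose proof (pos_INR t).
    assert (Hal_t : aligned d o c (W t i)).
    { destruct Hal as [Hnoise Hsig]. split.
      - intros l Hl. pose proof (IHoff l ltac:(lia) ltac:(lia)). pose proof (Hnoise l Hl). nra.
      - nra. }
    split.
    + intros q Hq Hqc. pose proof (off_signal_step t q ltac:(lia) Hal_t Hq Hqc).
      pose proof (IHoff q Hq Hqc). lra.
    + pose proof (signal_step t ltac:(lia) Hal_t). rewrite S_INR. lra.
Qed.

Lemma trained_neuron_on_class x :
  supp_pattern d n o c x -> eta1 * INR T1 / 12 <= neuron d n (W T1 i) x.
Proof.
  intros P. destruct (supp_pattern_signal _ _ _ _ _ P) as [jp [Hjp Ejp]].
  pose proof (dot_le_neuron d n (W T1 i) x jp Hjp) as Hz. rewrite Ejp in Hz.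
  destruct (aligned_progress T1 (le_n _)) as [_ Hsig]. destruct Hal as [_ Hpos]. lra.
Qed.

Lemma trained_neuron_off_class c' x :
  (c' < 2)%nat -> c' <> c -> supp_pattern d n o c' x -> neuron d n (W T1 i) x <= r.
Proof.
  intros Hc' Hne P. apply neuron_le; [lra|]. intros j Hj.
  destruct (supp_pattern_patch _ _ _ _ _ _ P Hj) as [q [-> Hq]].
  destruct (aligned_progress T1 (le_n _)) as [Hoff _].
  assert (Hqd : (q < d)%nat) by lia.
  pose proof (Hoff q Hqd ltac:(lia)). pose proof (init_coord_bound i q Hi Hqd).
  pose proof (Rle_abs (dot d (W 0%nat i) (o q))). lra.
Qed.

End AlignedNeuron.

End GradientDescent.

Lemma rsum_margin_lists k (v z : nat -> R) (Lc Lo : list nat) V G rho y :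
  NoDup Lc -> NoDup Lo -> (forall i, In i Lc -> (i < k)%nat) -> (forall i, In i Lo -> (i < k)%nat) ->
  0 <= V -> (forall i, (i < k)%nat -> 0 <= z i) ->
  (forall i, In i Lc -> y * v i = V /\ G <= z i) ->
  (forall i, In i Lo -> y * v i = - V /\ z i <= rho) ->
  (forall i, (i < k)%nat -> ~ In i Lc -> ~ In i Lo -> v i = 0) ->
  V * G * INR (length Lc) - V * rho * INR (length Lo) <= y * rsum k (fun i => v i * z i).
Proof.
  intros Hc Ho Hck Hok HV Hz Hin_c Hin_o Hout.
  apply Rle_trans with (rsum k (fun i => V * G * indic Lc i + - (V * rho) * indic Lo i)).
  { rewrite rsum_plus, !rsum_scal, !rsum_indic by assumption. lra. }
  rewrite <- rsum_scal. apply rsum_le. intros i Hi. specialize (Hz i Hi). unfold indic.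
  destruct (in_dec Nat.eq_dec i Lc) as [Ic|Ic], (in_dec Nat.eq_dec i Lo) as [Io|Io].
  - destruct (Hin_c i Ic) as [Hv _], (Hin_o i Io) as [Hv' _].
    replace (y * (v i * z i)) with (V * z i) by (rewrite <- Hv; ring).
    assert (HV0 : V = 0) by lra. rewrite HV0. lra.
  - destruct (Hin_c i Ic) as [Hv HG]. replace (y * (v i * z i)) with (V * z i) by (rewrite <- Hv; ring).
    nra.
  - destruct (Hin_o i Io) as [Hv Hr]. replace (y * (v i * z i)) with (- V * z i) by (rewrite <- Hv; ring).
    nra.
  - rewrite (Hout i Hi Ic Io). lra.
Qed.

Lemma rsum_sq_le_lists k (v : nat -> R) (L1 L2 : list nat) B :
  NoDup L1 -> NoDup L2 -> (forall i, In i L1 -> (i < k)%nat) -> (forall i, In i L2 -> (i < k)%nat) ->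
  0 <= B -> (forall i, In i L1 \/ In i L2 -> v i ^ 2 <= B) ->
  (forall i, (i < k)%nat -> ~ In i L1 -> ~ In i L2 -> v i = 0) ->
  rsum k (fun i => v i ^ 2) <= B * (INR (length L1) + INR (length L2)).
Proof.
  intros Hnd1 Hnd2 H1k H2k HB Hin Hout.
  rewrite <- (rsum_indic k L1), <- (rsum_indic k L2), <- rsum_plus, <- rsum_scal
    by assumption.
  apply rsum_le. intros i Hi. unfold indic.
  destruct (in_dec Nat.eq_dec i L1) as [I1|I1], (in_dec Nat.eq_dec i L2) as [I2|I2];
    try (specialize (Hin i (or_introl I1)) || specialize (Hin i (or_intror I2)); lra).
  rewrite (Hout i Hi I1 I2). lra.
Qed.

(* The margin is at least [80/48 - 80/200]. *)
Lemma margin_constants (k d T1 : nat) eta1 r c1 c2 :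
  (1 <= k)%nat -> (1 <= d)%nat -> (1 <= T1)%nat -> 0 < r -> r <= eta1 / 200 ->
  INR k / (4 * INR d) <= c1 -> 0 <= c2 -> c2 <= INR k / INR d ->
  1 < 80 * INR d / (INR k * eta1 * INR T1) * (eta1 * INR T1 / 12) * c1
      - 80 * INR d / (INR k * eta1 * INR T1) * r * c2.
Proof.
  intros Hk Hd HT Hr Hreta Hc1 Hc2 Hc2'.
  assert (HK : 1 <= INR k) by (apply (le_INR 1); exact Hk).
  assert (HD : 1 <= INR d) by (apply (le_INR 1); exact Hd).
  assert (HT1 : 1 <= INR T1) by (apply (le_INR 1); exact HT).
  assert (Heta : 0 < eta1) by lra.
  assert (Hx1 : 1 <= 4 * INR d * c1 / INR k).
  { apply Rmult_le_reg_r with (INR k / (4 * INR d)); [apply Rdiv_lt_0_compat; lra|].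
    replace (4 * INR d * c1 / INR k * (INR k / (4 * INR d))) with c1 by (field; lra). lra. }
  assert (Hx2 : INR d * c2 / INR k <= 1).
  { apply Rmult_le_reg_r with (INR k / INR d); [apply Rdiv_lt_0_compat; lra|].
    replace (INR d * c2 / INR k * (INR k / INR d)) with c2 by (field; lra). lra. }
  assert (Hx2' : 0 <= INR d * c2 / INR k) by (apply Rmult_le_pos; [nra|left; apply Rinv_0_lt_compat; lra]).
  assert (Hratio : r / (eta1 * INR T1) <= 1 / 200).
  { apply Rmult_le_reg_r with (eta1 * INR T1); [nra|].
    replace (r / (eta1 * INR T1) * (eta1 * INR T1)) with r by (field; lra). nra. }
  assert (Hratio' : 0 <= r / (eta1 * INR T1)) by (apply Rmult_le_pos; [lra|left; apply Rinv_0_lt_compat; nra]).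
  replace (80 * INR d / (INR k * eta1 * INR T1) * (eta1 * INR T1 / 12) * c1
           - 80 * INR d / (INR k * eta1 * INR T1) * r * c2)
    with (80 / 48 * (4 * INR d * c1 / INR k) - 80 * (r / (eta1 * INR T1)) * (INR d * c2 / INR k))
    by (field; lra).
  nra.
Qed.

Lemma class_margin (k d T1 : nat) eta1 r (v z : nat -> R) (Lc Lo : list nat) y :
  (1 <= k)%nat -> (1 <= d)%nat -> (1 <= T1)%nat -> 0 < r -> r <= eta1 / 200 ->
  NoDup Lc -> NoDup Lo -> (forall i, In i Lc -> (i < k)%nat) -> (forall i, In i Lo -> (i < k)%nat) ->
  INR k / (4 * INR d) <= INR (length Lc) -> INR (length Lo) <= INR k / INR d ->
  (forall i, (i < k)%nat -> 0 <= z i) ->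
  (forall i, In i Lc ->
     y * v i = 80 * INR d / (INR k * eta1 * INR T1) /\ eta1 * INR T1 / 12 <= z i) ->
  (forall i, In i Lo -> y * v i = - (80 * INR d / (INR k * eta1 * INR T1)) /\ z i <= r) ->
  (forall i, (i < k)%nat -> ~ In i Lc -> ~ In i Lo -> v i = 0) ->
  1 < y * rsum k (fun i => v i * z i).
Proof.
  intros Hk Hd HT Hr Hreta HcNd HoNd Hck Hok Hlc Hlo Hz Hin_c Hin_o Hout.
  assert (HV : 0 <= 80 * INR d / (INR k * eta1 * INR T1)).
  { pose proof (lt_0_INR d ltac:(lia)). pose proof (lt_0_INR k ltac:(lia)).
    pose proof (lt_0_INR T1 ltac:(lia)).
    left. apply Rdiv_lt_0_compat; [lra|]. apply Rmult_lt_0_compat; [nra|lra]. }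
  eapply Rlt_le_trans.
  - apply (margin_constants k d T1 eta1 r (INR (length Lc)) (INR (length Lo)));
      (assumption || apply pos_INR).
  - apply rsum_margin_lists; assumption.
Qed.

Lemma norm_constants (k d T1 : nat) eta1 c1 c2 :
  (1 <= k)%nat -> (1 <= d)%nat -> (1 <= T1)%nat -> 0 < eta1 ->
  c1 <= INR k / INR d -> c2 <= INR k / INR d ->
  (80 * INR d / (INR k * eta1 * INR T1)) ^ 2 * (c1 + c2)
  <= 2 * 80 ^ 2 * INR d / (INR k * eta1 ^ 2 * INR T1 ^ 2).
Proof.
  intros Hk Hd HT Heta Hc1 Hc2.
  assert (HK : 1 <= INR k) by (apply (le_INR 1); exact Hk).
  assert (HD : 1 <= INR d) by (apply (le_INR 1); exact Hd).
  assert (HT1 : 1 <= INR T1) by (apply (le_INR 1); exact HT).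
  apply Rle_trans with ((80 * INR d / (INR k * eta1 * INR T1)) ^ 2 * (2 * (INR k / INR d))).
  - apply Rmult_le_compat_l; [apply pow2_ge_0|lra].
  - right. field. lra.
Qed.

Theorem mainTheorem9
  (n d k T1 : nat) (o : nat -> vec) (S1 : list (input * R))
  (eta1 r : R) (a : nat -> R) (W : nat -> nat -> vec)
  (jsel : nat -> nat -> input -> nat) (v : nat -> R) :
  (1 <= n)%nat -> (3 <= d)%nat -> (1 <= k)%nat ->
  (forall p q, (p < d)%nat -> (q < d)%nat ->
     dot d (o p) (o q) = if Nat.eq_dec p q then 1 else 0) ->
  (forall s, In s S1 -> in_supp d n o s) -> NoDup S1 -> (1 <= length S1)%nat ->
  INR (length S1) / 3 <= INR (count_lab 1 S1) ->
  INR (length S1) / 3 <= INR (count_lab (-1) S1) ->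
  0 < r ->
  (forall i, (i < k)%nat -> sqrt (dot d (W 0%nat i) (W 0%nat i)) = r) ->
  (forall i, (i < k)%nat -> a i = 1 \/ a i = -1) ->
  (forall t i x, (jsel t i x < n)%nat /\
     forall j, (j < n)%nat -> dot d (W t i) (x j) <= dot d (W t i) (x (jsel t i x))) ->
  (forall t, (1 <= t <= T1)%nat -> forall i, (i < k)%nat -> forall c,
     W t i c = W (t - 1)%nat i c - eta1 *
       grad d n k S1 (W (t - 1)%nat) a
         (fun i' x => pvec d (W (t - 1)%nat i') x (jsel (t - 1)%nat i' x)) i c) ->
  (1 <= T1)%nat ->
  eta1 <= 1 / (4 * INR k * (INR T1 + 1)) ->
  r <= eta1 / 200 ->
  (exists c, card_is (fun i => (i < k)%nat /\ a i = 1 /\ W0plus d o (W 0%nat i)) c /\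
     INR k / (4 * INR d) <= INR c <= INR k / INR d) ->
  (exists c, card_is (fun i => (i < k)%nat /\ a i = -1 /\ W0minus d o (W 0%nat i)) c /\
     INR k / (4 * INR d) <= INR c <= INR k / INR d) ->
  (forall i, (i < k)%nat ->
     (a i = 1 /\ W0plus d o (W 0%nat i) -> v i = 80 * INR d / (INR k * eta1 * INR T1)) /\
     (a i = -1 /\ W0minus d o (W 0%nat i) -> v i = - (80 * INR d / (INR k * eta1 * INR T1))) /\
     (~ (a i = 1 /\ W0plus d o (W 0%nat i)) -> ~ (a i = -1 /\ W0minus d o (W 0%nat i)) ->
        v i = 0)) ->
  (forall xy, in_supp d n o xy ->
     snd xy * rsum k (fun i => v i * neuron d n (W T1 i) (fst xy)) > 1) /\
  rsum k (fun i => v i ^ 2) <= 2 * 80 ^ 2 * INR d / (INR k * eta1 ^ 2 * INR T1 ^ 2).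
Proof.
  intros _ Hd Hk Horth Hsupp _ Hm Hcp Hcm Hr Hw0 Ha Hjsel Hgd HT1 Heta Hreta
    [cP [[LP [HLPnd [HLPin HLPlen]]] HcP]] [cM [[LM [HLMnd [HLMin HLMlen]]] HcM]] Hv.
  pose proof (trained_neuron_on_class n d k T1 o S1 eta1 r a W jsel
                Hd Hk Horth Hsupp Hm Hcp Hcm Hr Hw0 Ha Hjsel Hgd Heta Hreta) as Hon.
  pose proof (trained_neuron_off_class n d k T1 o S1 eta1 r a W jsel
                Hd Hk Horth Hsupp Hm Hcp Hcm Hr Hw0 Ha Hjsel Hgd Heta Hreta) as Hoff.
  set (V := 80 * INR d / (INR k * eta1 * INR T1)).
  assert (Hpos : forall i, In i LP -> (i < k)%nat /\ v i = V /\
            (forall x, supp_pattern d n o 0 x -> eta1 * INR T1 / 12 <= neuron d n (W T1 i) x) /\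
            (forall x, supp_pattern d n o 1 x -> neuron d n (W T1 i) x <= r)).
  { intros i Hi. apply HLPin in Hi as (Hik & Hai & Hal).
    repeat split; [exact Hik | apply (proj1 (Hv i Hik)); auto | intros x P ..].
    - exact (Hon 0%nat i ltac:(lia) Hik Hai Hal x P).
    - exact (Hoff 0%nat i ltac:(lia) Hik Hai Hal 1%nat x ltac:(lia) ltac:(lia) P). }
  assert (Hneg : forall i, In i LM -> (i < k)%nat /\ v i = - V /\
            (forall x, supp_pattern d n o 1 x -> eta1 * INR T1 / 12 <= neuron d n (W T1 i) x) /\
            (forall x, supp_pattern d n o 0 x -> neuron d n (W T1 i) x <= r)).
  { intros i Hi. apply HLMin in Hi as (Hik & Hai & Hal).
    repeat split; [exact Hik | apply (proj1 (proj2 (Hv i Hik))); auto | intros x P ..].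
    - exact (Hon 1%nat i ltac:(lia) Hik Hai Hal x P).
    - exact (Hoff 1%nat i ltac:(lia) Hik Hai Hal 0%nat x ltac:(lia) ltac:(lia) P). }
  assert (Hzero : forall i, (i < k)%nat -> ~ In i LP -> ~ In i LM -> v i = 0)
    by (intros i Hi HnP HnM; apply (proj2 (proj2 (Hv i Hi)));
        [intro; apply HnP, HLPin | intro; apply HnM, HLMin]; tauto).
  assert (HLPk : forall i, In i LP -> (i < k)%nat) by (intros i Hi; apply Hpos, Hi).
  assert (HLMk : forall i, In i LM -> (i < k)%nat) by (intros i Hi; apply Hneg, Hi).
  split.
  - intros xy Hxy. destruct (in_supp_class _ _ _ _ Hxy) as [[|[|]] [Hc [-> P]]]; [| |lia].
    + apply (class_margin k d T1 eta1 r v _ LP LM); rewrite ?HLPlen, ?HLMlen;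
        try tauto; try lia; auto using neuron_nonneg; intros i Hi.
      * destruct (Hpos i Hi) as (_ & -> & Hsig & _). split; [unfold V; simpl; ring | auto].
      * destruct (Hneg i Hi) as (_ & -> & _ & Hnoise). split; [unfold V; simpl; ring | auto].
    + apply (class_margin k d T1 eta1 r v _ LM LP); rewrite ?HLPlen, ?HLMlen;
        try tauto; try lia; auto using neuron_nonneg; intros i Hi.
      * destruct (Hneg i Hi) as (_ & -> & Hsig & _). split; [unfold V; simpl; ring | auto].
      * destruct (Hpos i Hi) as (_ & -> & _ & Hnoise). split; [unfold V; simpl; ring | auto].
  - eapply Rle_trans.
    + apply (rsum_sq_le_lists k v LP LM (V ^ 2)); auto using pow2_ge_0.
      * intros i [Hi|Hi]; [destruct (Hpos i Hi) as (_ & -> & _) | destruct (Hneg i Hi) as (_ & -> & _)];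
          right; ring.
    + rewrite HLPlen, HLMlen. apply norm_constants; (lia || lra).
Qed.
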